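(* Let $A$ be a locally-complex Cayley--Dickson algebra and let $f(x)=x^n+a_{n-1}x^{n-1}+\dots+a_0\in A[x]$ be monic with $n\ge1$. Then every root $r\in A$ of $f(x)$ and every root $r\in A$ of $f'(x)$ satisfies $|r|<R_1(f)$, $|r|<R_2(f)$ and $|r|\le R_3(f)$, where $R_1(f)=\sqrt{1+\sum_{k=0}^{n-1}|a_k|^2}$, $R_2(f)=1+\max_{0\le k\le n-1}|a_k|$, $R_3(f)=\max\{1,\sum_{k=0}^{n-1}|a_k|\}$. In terms of the spectral radius: $\rho(f),\rho(f')<R_1(f)$, $\rho(f),\rho(f')<R_2(f)$, $\rho(f),\rho(f')\le R_3(f)$.
   Context: Real Cayley--Dickson algebras: $A_0=\mathbb{R}$ with identity involution, $A_{k+1}=A_k\{\gamma_k\}=A_k\times A_k$ with product $(a,b)(c,d)=(ac+\gamma_k\bar d b,\ da+b\bar c)$ and involution $\overline{(a,b)}=(\bar a,-b)$. A real unital algebra is locally-complex if every non-real element generates a subalgebra isomorphic to $\mathbb{C}$ (for Cayley--Dickson algebras: all $\gamma_k=-1$ up to isomorphism). Norm $\mathrm{n}(\lambda)=\bar\lambda\lambda$, $|\lambda|=\sqrt{\mathrm{n}(\lambda)}$ (Euclidean norm). $A[x]=A\otimes_{\mathbb{R}}\mathbb{R}[x]$ with central $x$; substitution $f(r)=\sum_k a_k(r^k)$; formal derivative $f'(x)=\sum_k ka_kx^{k-1}$. The spectral radius of $g\in A[x]$ is $\rho(g)=\sup\{|\lambda|:\lambda\in A,\ g(\lambda)=0\}$.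 *)

(* Real Cayley--Dickson algebras A_m (dim 2^m) over a
   realType R, with all gamma_k = -1 (the locally-complex ones). *)
From HB Require Import structures.
From mathcomp Require Import all_boot all_order all_algebra.
From mathcomp Require Import reals.
Set Implicit Arguments. Unset Strict Implicit. Unset Printing Implicit Defensive.
Import Order.TTheory GRing.Theory Num.Theory.
Local Open Scope ring_scope.

Section CD.
Variable R : realType.

Fixpoint cd (m : nat) : Type :=
  match m with 0%N => R | S k => (cd k * cd k)%type end.

Fixpoint cd_zero (m : nat) : cd m :=
  match m return cd m with 0%N => 0 | S k => (cd_zero k, cd_zero k) end.

Fixpoint cd_real (m : nat) (c : R) : cd m :=
  match m return cd m with 0%N => c | S k => (cd_real k c, cd_zero k) end.

Definition cd_one (m : nat) : cd m := cd_real m 1.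

Fixpoint cd_add (m : nat) : cd m -> cd m -> cd m :=
  match m return cd m -> cd m -> cd m with
  | 0%N => fun x y => x + y
  | S k => fun x y => (cd_add x.1 y.1, cd_add x.2 y.2)
  end.

Fixpoint cd_opp (m : nat) : cd m -> cd m :=
  match m return cd m -> cd m with
  | 0%N => fun x => - x
  | S k => fun x => (cd_opp x.1, cd_opp x.2)
  end.

Fixpoint cd_conj (m : nat) : cd m -> cd m :=
  match m return cd m -> cd m with
  | 0%N => fun x => x
  | S k => fun x => (cd_conj x.1, cd_opp x.2)
  end.

(* product (a,b)(c,d) = (ac + gamma conj(d) b, d a + b conj(c)), gamma = -1 *)
Fixpoint cd_mul (m : nat) : cd m -> cd m -> cd m :=
  match m return cd m -> cd m -> cd m with
  | 0%N => fun x y => x * y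
  | S k => fun x y =>
      (cd_add (cd_mul x.1 y.1) (cd_opp (cd_mul (cd_conj y.2) x.2)),
       cd_add (cd_mul y.2 x.1) (cd_mul x.2 (cd_conj y.1)))
  end.

Fixpoint cd_re (m : nat) : cd m -> R :=
  match m return cd m -> R with
  | 0%N => fun x => x
  | S k => fun x => cd_re x.1
  end.

(* norm n(l) = conj(l) l, which is real; |l| = sqrt(n(l)) *)
Definition cd_n (m : nat) (l : cd m) : R := cd_re (cd_mul (cd_conj l) l).
Definition cd_abs (m : nat) (l : cd m) : R := Num.sqrt (cd_n l).

(* powers r^k (Cayley--Dickson algebras are power-associative) *)
Fixpoint cd_pow (m : nat) (r : cd m) (k : nat) : cd m :=
  match k with 0%N => cd_one m | S j => cd_mul r (cd_pow r j) end.

(* polynomials in A[x] as coefficient lists [a_0; a_1; ...] *)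
Definition cd_peval (m : nat) (p : seq (cd m)) (r : cd m) : cd m :=
  \big[@cd_add m/cd_zero m]_(i < size p) cd_mul (nth (cd_zero m) p i) (cd_pow r i).

Definition cd_deriv (m : nat) (p : seq (cd m)) : seq (cd m) :=
  [seq cd_mul (cd_real m i%:R) (nth (cd_zero m) p i) | i <- iota 1 (size p).-1].

(* the three bounds, for f = x^n + a_{n-1}x^{n-1} + ... + a_0, a = [a_0;...;a_{n-1}] *)
Definition R1 (m : nat) (a : seq (cd m)) : R :=
  Num.sqrt (1 + \sum_(k < size a) cd_abs (nth (cd_zero m) a k) ^+ 2).
Definition R2 (m : nat) (a : seq (cd m)) : R :=
  1 + \big[Num.max/0]_(k < size a) cd_abs (nth (cd_zero m) a k).
Definition R3 (m : nat) (a : seq (cd m)) : R :=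
  Num.max 1 (\sum_(k < size a) cd_abs (nth (cd_zero m) a k)).

End CD.

From HB Require Import structures.
From mathcomp Require Import all_boot all_order all_algebra.
From mathcomp Require Import reals.
From mathcomp Require Import ring lra.
Set Implicit Arguments. Unset Strict Implicit. Unset Printing Implicit Defensive.
Import Order.TTheory GRing.Theory Num.Theory.
Local Open Scope ring_scope.

(* Let <x, y> = re (conj x * y) be the Euclidean inner product on A_m.  Right
   multiplication by x is adjoint to right multiplication by conj x, and the
   subalgebra R + R r generated by r is commutative, with multiplicative norm.
   Pairing s(r) = 0 with r^d, for s of degree d with real leading coefficient L,
   therefore gives
     L |r|^(2d) = - sum_(i<d) <s_i r^i, r^d> = - sum_(i<d) <s_i, r^d conj(r^i)>
               <= sum_(i<d) |s_i| |r|^(d+i),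
   that is, L |r|^d <= sum_(i<d) |s_i| |r|^i.  From this real inequality the three
   Cauchy-type bounds follow as for real polynomials, via Cauchy-Schwarz and the
   geometric sum.  For f' the coefficients are (i+1) a_(i+1) with leading
   coefficient n, and (i+1)/n <= 1. *)

(** * Cauchy-type bounds for real polynomial inequalities *)

Lemma sqrtrX (R : rcfType) (a : R) k : 0 <= a -> Num.sqrt (a ^+ k) = Num.sqrt a ^+ k.
Proof.
move=> a_ge0; rewrite -{1}(sqr_sqrtr a_ge0) -exprM mulnC exprM sqrtr_sqr.
by rewrite ger0_norm ?exprn_ge0 ?sqrtr_ge0.
Qed.

Lemma cauchy_schwarzD (R : realFieldType) (A1 B1 C1 A2 B2 C2 : R) :
  0 <= A1 -> 0 <= B1 -> 0 <= A2 -> 0 <= B2 ->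
  C1 ^+ 2 <= A1 * B1 -> C2 ^+ 2 <= A2 * B2 -> (C1 + C2) ^+ 2 <= (A1 + A2) * (B1 + B2).
Proof.
move=> A1_ge0 B1_ge0 A2_ge0 B2_ge0 h1 h2.
have h12 : (C1 * C2) ^+ 2 <= (A1 * B2) * (A2 * B1).
  rewrite exprMn (_ : _ * (A2 * B1) = (A1 * B1) * (A2 * B2)); last by ring.
  by apply: ler_pM => //; exact: sqr_ge0.
have amgm : (2 * (C1 * C2)) ^+ 2 <= (A1 * B2 + A2 * B1) ^+ 2.
  have := sqr_ge0 (A1 * B2 - A2 * B1); rewrite !expr2 in h12 *; lra.
suff : 2 * (C1 * C2) <= A1 * B2 + A2 * B1 by rewrite !expr2 in h1 h2 *; lra.
have : 0 <= A1 * B2 + A2 * B1 by rewrite addr_ge0 ?mulr_ge0.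
rewrite !expr2 in amgm; nra.
Qed.

Section CauchyBounds.
Variable R : realFieldType.
Implicit Types (x c : R).

Lemma cauchy_schwarz_sum d (u v : nat -> R) :
  (\sum_(i < d) u i * v i) ^+ 2 <= (\sum_(i < d) u i ^+ 2) * (\sum_(i < d) v i ^+ 2).
Proof.
elim: d => [|d IH]; first by rewrite !big_ord0 expr0n mulr0.
rewrite !big_ord_recr /=; apply: cauchy_schwarzD; rewrite ?sqr_ge0 ?exprMn //.
all: by apply: sumr_ge0 => i _; rewrite sqr_ge0.
Qed.

Lemma ltr_geometric_sum d x c :
  0 <= x -> c <= x - 1 -> c * \sum_(i < d) x ^+ i < x ^+ d.
Proof.
move=> x0 cx; have G0 : 0 <= \sum_(i < d) x ^+ i by rewrite sumr_ge0 // => i _; rewrite exprn_ge0.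
apply: le_lt_trans (ler_wpM2r G0 cx) _.
by rewrite -subrX1 ltrBlDr ltrDl ltr01.
Qed.

Section RootBound.
Variables (d : nat) (b : nat -> R) (x : R).
Hypotheses (x_ge0 : 0 <= x) (x_root : x ^+ d <= \sum_(i < d) b i * x ^+ i).

Lemma cauchy_bound_sqr : x ^+ 2 < 1 + \sum_(i < d) b i ^+ 2.
Proof.
set B := \sum_(i < d) b i ^+ 2; rewrite ltNge; apply/negP => Bx.
have S_ge0 : 0 <= \sum_(i < d) b i * x ^+ i by exact: le_trans (exprn_ge0 _ x_ge0) x_root.
have cs : (\sum_(i < d) b i * x ^+ i) ^+ 2 <= B * \sum_(i < d) (x ^+ 2) ^+ i.
  under [X in _ <= _ * X]eq_bigr => i _ do rewrite -exprM mulnC exprM.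
  exact: cauchy_schwarz_sum.
have B_le : B <= x ^+ 2 - 1 by rewrite lerBrDl.
have := ltr_geometric_sum d (sqr_ge0 x) B_le.
rewrite -exprM mulnC exprM ltNge => /negP; apply; apply: le_trans cs.
by rewrite !expr2 ler_pM ?exprn_ge0.
Qed.

Lemma cauchy_bound_max M : (forall i, (i < d)%N -> b i <= M) -> x < 1 + M.
Proof.
move=> bM; rewrite ltNge; apply/negP => Mx.
have M_le : M <= x - 1 by rewrite lerBrDl.
have := ltr_geometric_sum d x_ge0 M_le; rewrite ltNge => /negP; apply.
apply: le_trans x_root _; rewrite mulr_sumr; apply: ler_sum => i _.
by rewrite ler_wpM2r ?exprn_ge0 ?bM.
Qed.

Lemma cauchy_bound_sum : (forall i, 0 <= b i) -> x <= Num.max 1 (\sum_(i < d) b i).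
Proof.
move=> b_ge0; rewrite le_max; have [//|x_gt1] := lerP x 1; apply/orP; right.
case: d x_root => [|d'] xd.
  by move: xd; rewrite big_ord0 expr0 ler10.
have xd'_gt0 : 0 < x ^+ d' by rewrite exprn_gt0 // (lt_trans ltr01).
rewrite -(ler_pM2r xd'_gt0) -exprS mulr_suml; apply: le_trans xd _.
apply: ler_sum => i _; rewrite ler_wpM2l // ler_weXn2l ?(ltW x_gt1) //.
by rewrite -ltnS.
Qed.

End RootBound.

Lemma sum_shift_le n k (F : nat -> R) : (forall i, 0 <= F i) ->
  \sum_(i < n - k) F (k + i)%N <= \sum_(i < n) F i.
Proof.
move=> F_ge0; have [kn|nk] := leqP k n; last first.
  by rewrite (eqP (ltnW nk : (n - k == 0)%N)) big_ord0 sumr_ge0.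
rewrite -!(big_mkord xpredT) (big_cat_nat (leq0n k) kn) /=.
have -> : \sum_(k <= i < n) F i = \sum_(i < n - k) F (k + i)%N.
  by rewrite -{1}(add0n k) big_addn big_mkord; apply: eq_bigr => i _; rewrite addnC.
by rewrite ler_wpDl ?sumr_ge0.
Qed.

End CauchyBounds.

(** * Real Cayley-Dickson algebras as inner-product spaces *)

Section CayleyDickson.
Variable R : realType.
Implicit Types (m : nat) (c d : R).

Fixpoint cd_scale m c : cd R m -> cd R m :=
  match m return cd R m -> cd R m with
  | 0%N => fun x => c * x
  | S k => fun x => (cd_scale c x.1, cd_scale c x.2)
  end.

Lemma cd_addC m : commutative (@cd_add R m).
Proof. elim: m => [|m IH] /= x y; first exact: addrC. by rewrite IH [cd_add x.2 _]IH. Qed.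

Lemma cd_addA m : associative (@cd_add R m).
Proof. elim: m => [|m IH] /= x y z; first exact: addrA. by rewrite !IH. Qed.

Lemma cd_add0r m : left_id (cd_zero R m) (@cd_add R m).
Proof. elim: m => [|m IH] /= x; first exact: add0r. by rewrite !IH; case: x. Qed.

Lemma cd_addr0 m : right_id (cd_zero R m) (@cd_add R m).
Proof. by move=> x; rewrite cd_addC cd_add0r. Qed.

Lemma cd_addrN m (x : cd R m) : cd_add x (cd_opp x) = cd_zero R m.
Proof. elim: m x => [|m IH] /= x; first exact: subrr. by rewrite !IH. Qed.

Lemma cd_addrACA m : interchange (@cd_add R m) (@cd_add R m).
Proof.
move=> a b c d; rewrite -!cd_addA; congr cd_add.
by rewrite cd_addA [cd_add b c]cd_addC -cd_addA.
Qed.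

Lemma cd_oppK m : involutive (@cd_opp R m).
Proof. elim: m => [|m IH] /= x; first exact: opprK. by rewrite !IH; case: x. Qed.

Lemma cd_oppD m : {morph @cd_opp R m : x y / cd_add x y}.
Proof. elim: m => [|m IH] /= x y; first exact: opprD. by rewrite !IH. Qed.

Lemma cd_opp0 m : cd_opp (cd_zero R m) = cd_zero R m.
Proof. elim: m => [|m IH] /=; first exact: oppr0. by rewrite IH. Qed.

Lemma cd_scalerDr m c : {morph @cd_scale m c : x y / cd_add x y}.
Proof. elim: m => [|m IH] /= x y; first exact: mulrDr. by rewrite !IH. Qed.

Lemma cd_scalerDl m (x : cd R m) c d :
  cd_scale (c + d) x = cd_add (cd_scale c x) (cd_scale d x).
Proof. elim: m x => [|m IH] /= x; first exact: mulrDl. by rewrite !IH. Qed.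

Lemma cd_scalerA m c d (x : cd R m) : cd_scale c (cd_scale d x) = cd_scale (c * d) x.
Proof. elim: m x => [|m IH] /= x; first exact: mulrA. by rewrite !IH. Qed.

Lemma cd_scale1r m (x : cd R m) : cd_scale 1 x = x.
Proof. elim: m x => [|m IH] /= x; first exact: mul1r. by rewrite !IH; case: x. Qed.

Lemma cd_scale0r m (x : cd R m) : cd_scale 0 x = cd_zero R m.
Proof. elim: m x => [|m IH] /= x; first exact: mul0r. by rewrite !IH. Qed.

Lemma cd_scaler0 m c : cd_scale c (cd_zero R m) = cd_zero R m.
Proof. elim: m => [|m IH] /=; first exact: mulr0. by rewrite IH. Qed.

Lemma cd_scalerN m c (x : cd R m) : cd_scale c (cd_opp x) = cd_opp (cd_scale c x).
Proof. elim: m x => [|m IH] /= x; first exact: mulrN. by rewrite !IH. Qed.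

Lemma cd_scaleNr m c (x : cd R m) : cd_scale (- c) x = cd_opp (cd_scale c x).
Proof. elim: m x => [|m IH] /= x; first exact: mulNr. by rewrite !IH. Qed.

Lemma cd_real0 m : cd_real m 0 = cd_zero R m.
Proof. by elim: m => [|m IH] //=; rewrite IH. Qed.

Lemma cd_realD m c d : cd_real m (c + d) = cd_add (cd_real m c) (cd_real m d).
Proof. elim: m => [|m IH] //=; by rewrite IH cd_add0r. Qed.

Lemma cd_realN m c : cd_opp (cd_real m c) = cd_real m (- c).
Proof. elim: m => [|m IH] //=; by rewrite IH cd_opp0. Qed.

Lemma cd_scale_real m c d : cd_scale c (cd_real m d) = cd_real m (c * d).
Proof. elim: m => [|m IH] //=; by rewrite IH cd_scaler0. Qed.

Lemma cd_re_real m c : cd_re (cd_real m c) = c.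
Proof. by elim: m. Qed.

Lemma cd_reD m (x y : cd R m) : cd_re (cd_add x y) = cd_re x + cd_re y.
Proof. by elim: m x y => [|m IH] /= x y. Qed.

Lemma cd_reN m (x : cd R m) : cd_re (cd_opp x) = - cd_re x.
Proof. by elim: m x => [|m IH] /= x. Qed.

Lemma cd_conjK m : involutive (@cd_conj R m).
Proof. elim: m => [|m IH] //= x; by rewrite IH cd_oppK; case: x. Qed.

Lemma cd_conjD m : {morph @cd_conj R m : x y / cd_add x y}.
Proof. elim: m => [|m IH] //= x y; by rewrite IH cd_oppD. Qed.

Lemma cd_conjN m : {morph @cd_conj R m : x / cd_opp x}.
Proof. elim: m => [|m IH] //= x; by rewrite IH. Qed.

Lemma cd_conjZ m c : {morph @cd_conj R m : x / cd_scale c x}.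
Proof. elim: m => [|m IH] //= x; by rewrite IH cd_scalerN. Qed.

Lemma cd_conj0 m : cd_conj (cd_zero R m) = cd_zero R m.
Proof. elim: m => [|m IH] //=; by rewrite IH cd_opp0. Qed.

Lemma cd_conj_real m c : cd_conj (cd_real m c) = cd_real m c.
Proof. elim: m => [|m IH] //=; by rewrite IH cd_opp0. Qed.

Lemma cd_conjE m (x : cd R m) : cd_conj x = cd_add (cd_real m (2 * cd_re x)) (cd_opp x).
Proof.
elim: m x => [|m IH] /= x; first lra.
by rewrite IH cd_add0r; case: x.
Qed.

Lemma cd_mulD m : left_distributive (@cd_mul R m) (@cd_add R m) /\
                  right_distributive (@cd_mul R m) (@cd_add R m).
Proof.
elim: m => [|m [IHl IHr]]; first by split=> x y z; [exact: mulrDl | exact: mulrDr].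
by split=> x y z /=; rewrite ?cd_conjD !(IHl, IHr, cd_oppD); congr pair; rewrite cd_addrACA.
Qed.

Lemma cd_mulDl m : left_distributive (@cd_mul R m) (@cd_add R m).
Proof. by case: (cd_mulD m). Qed.

Lemma cd_mulDr m : right_distributive (@cd_mul R m) (@cd_add R m).
Proof. by case: (cd_mulD m). Qed.

Lemma cd_mulN m : (forall x y : cd R m, cd_mul (cd_opp x) y = cd_opp (cd_mul x y)) /\
                  (forall x y : cd R m, cd_mul x (cd_opp y) = cd_opp (cd_mul x y)).
Proof.
elim: m => [|m [IHl IHr]]; first by split=> x y; [exact: mulNr | exact: mulrN].
by split=> x y /=; rewrite ?cd_conjN !(IHl, IHr, cd_oppD).
Qed.

Lemma cd_mulNl m (x y : cd R m) : cd_mul (cd_opp x) y = cd_opp (cd_mul x y).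
Proof. by case: (cd_mulN m). Qed.

Lemma cd_mulNr m (x y : cd R m) : cd_mul x (cd_opp y) = cd_opp (cd_mul x y).
Proof. by case: (cd_mulN m). Qed.

Lemma cd_mulZ m c : (forall x y : cd R m, cd_mul (cd_scale c x) y = cd_scale c (cd_mul x y)) /\
                    (forall x y : cd R m, cd_mul x (cd_scale c y) = cd_scale c (cd_mul x y)).
Proof.
elim: m => [|m [IHl IHr]]; first by split=> x y /=; [rewrite mulrA | rewrite mulrCA].
by split=> x y /=; rewrite ?cd_conjZ !(IHl, IHr, cd_scalerDr, cd_scalerN).
Qed.

Lemma cd_mulZl m c (x y : cd R m) : cd_mul (cd_scale c x) y = cd_scale c (cd_mul x y).
Proof. by case: (cd_mulZ m c). Qed.

Lemma cd_mulZr m c (x y : cd R m) : cd_mul x (cd_scale c y) = cd_scale c (cd_mul x y).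
Proof. by case: (cd_mulZ m c). Qed.

Lemma cd_mul0r m (x : cd R m) : cd_mul (cd_zero R m) x = cd_zero R m.
Proof. by rewrite -{1}(cd_scale0r (cd_zero R m)) cd_mulZl cd_scale0r. Qed.

Lemma cd_mulr0 m (x : cd R m) : cd_mul x (cd_zero R m) = cd_zero R m.
Proof. by rewrite -{1}(cd_scale0r (cd_zero R m)) cd_mulZr cd_scale0r. Qed.

Lemma cd_mul_real m c : (forall x : cd R m, cd_mul (cd_real m c) x = cd_scale c x) /\
                        (forall x : cd R m, cd_mul x (cd_real m c) = cd_scale c x).
Proof.
elim: m => [|m [IHl IHr]]; first by split=> x //=; rewrite mulrC.
split=> x /=; rewrite ?cd_conj_real ?cd_conj0 ?cd_mul0r ?cd_mulr0 ?cd_opp0.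
all: by rewrite ?cd_addr0 ?cd_add0r !(IHl, IHr).
Qed.

Lemma cd_mul_reall m c (x : cd R m) : cd_mul (cd_real m c) x = cd_scale c x.
Proof. by case: (cd_mul_real m c). Qed.

Lemma cd_mul_realr m c (x : cd R m) : cd_mul x (cd_real m c) = cd_scale c x.
Proof. by case: (cd_mul_real m c). Qed.

Lemma cd_conjM m (x y : cd R m) : cd_conj (cd_mul x y) = cd_mul (cd_conj y) (cd_conj x).
Proof.
elim: m x y => [|m IH] /= x y; first exact: mulrC.
rewrite cd_conjD cd_conjN !IH cd_oppD cd_conjN !cd_conjK cd_mulNl.
by congr pair; [rewrite cd_mulNr cd_oppK | rewrite !cd_mulNl cd_addC].
Qed.

Fixpoint cd_dot m : cd R m -> cd R m -> R :=
  match m return cd R m -> cd R m -> R with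
  | 0%N => fun x y => x * y
  | S k => fun x y => cd_dot x.1 y.1 + cd_dot x.2 y.2
  end.

Lemma cd_dotC m (x y : cd R m) : cd_dot x y = cd_dot y x.
Proof. elim: m x y => [|m IH] /= x y; first exact: mulrC. by rewrite IH [cd_dot x.2 _]IH. Qed.

Lemma cd_dotDl m (x y z : cd R m) : cd_dot (cd_add x y) z = cd_dot x z + cd_dot y z.
Proof. elim: m x y z => [|m IH] /= x y z; first exact: mulrDl. by rewrite !IH addrACA. Qed.

Lemma cd_dotNl m (x y : cd R m) : cd_dot (cd_opp x) y = - cd_dot x y.
Proof. elim: m x y => [|m IH] /= x y; first exact: mulNr. by rewrite !IH opprD. Qed.

Lemma cd_dotZl m c (x y : cd R m) : cd_dot (cd_scale c x) y = c * cd_dot x y.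
Proof. elim: m x y => [|m IH] /= x y; first exact: esym (mulrA _ _ _). by rewrite !IH mulrDr. Qed.

Lemma cd_dot0l m (y : cd R m) : cd_dot (cd_zero R m) y = 0.
Proof. by rewrite -(cd_scale0r (cd_zero R m)) cd_dotZl mul0r. Qed.

Lemma cd_dotDr m (x y z : cd R m) : cd_dot z (cd_add x y) = cd_dot z x + cd_dot z y.
Proof. by rewrite cd_dotC cd_dotDl !(cd_dotC z). Qed.

Lemma cd_dotNr m (x y : cd R m) : cd_dot x (cd_opp y) = - cd_dot x y.
Proof. by rewrite cd_dotC cd_dotNl cd_dotC. Qed.

Lemma cd_dotZr m c (x y : cd R m) : cd_dot x (cd_scale c y) = c * cd_dot x y.
Proof. by rewrite cd_dotC cd_dotZl cd_dotC. Qed.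

Lemma cd_dotJ m (x y : cd R m) : cd_dot (cd_conj x) (cd_conj y) = cd_dot x y.
Proof. elim: m x y => [|m IH] //= x y. by rewrite !IH cd_dotNl cd_dotNr opprK. Qed.

Lemma cd_dot_reall m c (x : cd R m) : cd_dot (cd_real m c) x = c * cd_re x.
Proof. elim: m x => [|m IH] //= x. by rewrite IH cd_dot0l addr0. Qed.

Lemma cd_dotxx_ge0 m (x : cd R m) : 0 <= cd_dot x x.
Proof. elim: m x => [|m IH] /= x; [exact: sqr_ge0 | exact: addr_ge0]. Qed.

Lemma cd_re_mul m (x y : cd R m) : cd_re (cd_mul x y) = cd_dot (cd_conj x) y.
Proof.
elim: m x y => [|m IH] //= x y.
by rewrite cd_reD cd_reN !IH cd_conjK cd_dotNl [cd_dot x.2 _]cd_dotC.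
Qed.

Lemma cd_nE m (x : cd R m) : cd_n x = cd_dot x x.
Proof. by rewrite /cd_n cd_re_mul cd_conjK. Qed.

Lemma cd_dot_mul_adj m :
  (forall a x y : cd R m, cd_dot (cd_mul a x) y = cd_dot a (cd_mul y (cd_conj x))) /\
  (forall a x y : cd R m, cd_dot (cd_mul x a) y = cd_dot a (cd_mul (cd_conj x) y)).
Proof.
elim: m => [|m [IHr IHl]] /=.
  by split=> a x y; [rewrite mulrAC -mulrA | rewrite mulrCA mulrA].
have dotJ (u v : cd R m) : cd_dot (cd_conj u) v = cd_dot u (cd_conj v).
  by rewrite -cd_dotJ cd_conjK.
split=> a x y /=;
  rewrite !(cd_dotDl, cd_dotDr, cd_dotNl, cd_dotNr, cd_mulNl, cd_mulNr, cd_conjN, cd_conjK).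
  by rewrite (IHr a.1) (IHl a.2) (IHl a.1) (IHr a.2) !cd_conjK; lra.
rewrite (IHl a.1) (IHr (cd_conj a.2)) (IHr a.2) (IHl (cd_conj a.1)) !dotJ !cd_conjM !cd_conjK.
lra.
Qed.

Lemma cd_dot_mulr_adj m (a x y : cd R m) :
  cd_dot (cd_mul a x) y = cd_dot a (cd_mul y (cd_conj x)).
Proof. by case: (cd_dot_mul_adj m). Qed.

Lemma cd_mul_conj m :
  (forall x : cd R m, cd_mul x (cd_conj x) = cd_real m (cd_dot x x)) /\
  (forall x : cd R m, cd_mul (cd_conj x) x = cd_real m (cd_dot x x)).
Proof.
elim: m => [|m [IHr IHl]]; first by split=> x //=; rewrite mulrC.
split=> x /=; rewrite ?cd_conjN ?cd_conjK !cd_mulNl ?cd_mulNr ?cd_oppK !(IHr, IHl) cd_realD.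
  by rewrite [cd_add (cd_opp _) _]cd_addC cd_addrN.
by rewrite cd_addrN.
Qed.

Lemma cd_mulrJ m (x : cd R m) : cd_mul x (cd_conj x) = cd_real m (cd_dot x x).
Proof. by case: (cd_mul_conj m). Qed.

Lemma cd_dot_cauchy_schwarz m (x y : cd R m) : cd_dot x y ^+ 2 <= cd_dot x x * cd_dot y y.
Proof.
elim: m x y => [|m IH] /= x y; first by rewrite exprMn !expr2 mulrACA.
by apply: cauchy_schwarzD; rewrite ?cd_dotxx_ge0.
Qed.

(** * The subalgebra generated by one element *)

Section RealSpan.
Variables (m : nat) (r : cd R m).
Local Notation t := (cd_re r).
Local Notation N := (cd_dot r r).

Definition cd_comb a b := cd_add (cd_real m a) (cd_scale b r).

Definition comb_norm a b := a ^+ 2 + 2 * a * b * t + b ^+ 2 * N.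

Lemma cd_combD a b c d : cd_add (cd_comb a b) (cd_comb c d) = cd_comb (a + c) (b + d).
Proof. by rewrite /cd_comb cd_addrACA cd_realD cd_scalerDl. Qed.

Lemma cd_comb_real a : cd_real m a = cd_comb a 0.
Proof. by rewrite /cd_comb cd_scale0r cd_addr0. Qed.

Lemma cd_comb_scale b : cd_scale b r = cd_comb 0 b.
Proof. by rewrite /cd_comb cd_real0 cd_add0r. Qed.

Lemma cd_combZ c a b : cd_scale c (cd_comb a b) = cd_comb (c * a) (c * b).
Proof. by rewrite /cd_comb cd_scalerDr cd_scale_real cd_scalerA. Qed.

Lemma cd_mulrr : cd_mul r r = cd_comb (- N) (2 * t).
Proof.
have := cd_mulrJ r; rewrite cd_conjE cd_mulDr cd_mul_realr cd_mulNr => rJr.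
have -> : cd_mul r r = cd_add (cd_scale (2 * t) r) (cd_opp (cd_real m N)).
  by rewrite -rJr cd_oppD cd_oppK cd_addA cd_addrN cd_add0r.
by rewrite cd_realN cd_comb_real cd_comb_scale cd_combD add0r addr0.
Qed.

Lemma cd_mulr_comb c d : cd_mul r (cd_comb c d) = cd_comb (- (d * N)) (c + 2 * t * d).
Proof.
rewrite {1}/cd_comb cd_mulDr cd_mul_realr cd_mulZr cd_mulrr cd_comb_scale cd_combZ cd_combD.
by congr cd_comb; ring.
Qed.

Lemma cd_mul_comb a b c d :
  cd_mul (cd_comb a b) (cd_comb c d) =
  cd_comb (a * c - b * d * N) (a * d + b * c + 2 * t * b * d).
Proof.
rewrite {1}/cd_comb cd_mulDl cd_mul_reall cd_mulZl cd_mulr_comb !cd_combZ cd_combD.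
by congr cd_comb; ring.
Qed.

Lemma cd_conj_comb a b : cd_conj (cd_comb a b) = cd_comb (a + 2 * t * b) (- b).
Proof.
rewrite /cd_comb cd_conjD cd_conj_real cd_conjZ cd_conjE cd_scalerDr cd_scalerN -cd_scaleNr.
by rewrite cd_scale_real !cd_comb_real !cd_comb_scale !cd_combD; congr cd_comb; ring.
Qed.

Lemma cd_dot_comb a b : cd_dot (cd_comb a b) (cd_comb a b) = comb_norm a b.
Proof.
rewrite /cd_comb /comb_norm !(cd_dotDl, cd_dotDr, cd_dotZl, cd_dotZr) !cd_dot_reall.
by rewrite [cd_dot r _]cd_dotC cd_dot_reall !cd_re_real; ring.
Qed.

Lemma comb_normM a b c d :
  comb_norm (a * c - b * d * N) (a * d + b * c + 2 * t * b * d) =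
  comb_norm a b * comb_norm c d.
Proof. rewrite /comb_norm; ring. Qed.

Lemma comb_normJ a b : comb_norm (a + 2 * t * b) (- b) = comb_norm a b.
Proof. rewrite /comb_norm; ring. Qed.

Lemma cd_pow_comb k : exists a b, cd_pow r k = cd_comb a b /\ comb_norm a b = N ^+ k.
Proof.
elim: k => [|k [a [b [rk normab]]]].
  by exists 1, 0; rewrite /= /cd_one cd_comb_real /comb_norm; split=> //; ring.
exists (0 * a - 1 * b * N), (0 * b + 1 * a + 2 * t * 1 * b).
have r_comb : r = cd_comb 0 1 by rewrite -cd_comb_scale cd_scale1r.
rewrite /= rk {1}r_comb cd_mul_comb comb_normM normab exprS; split=> //.
by congr (_ * _); rewrite /comb_norm; ring.
Qed.

Lemma cd_dot_pow n : cd_dot (cd_pow r n) (cd_pow r n) = N ^+ n.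
Proof. by have [a [b [-> <-]]] := cd_pow_comb n; rewrite cd_dot_comb. Qed.

Lemma cd_dot_pow_mul_conj n i (w := cd_mul (cd_pow r n) (cd_conj (cd_pow r i))) :
  cd_dot w w = N ^+ (n + i).
Proof.
have [a [b [ran nab]]] := cd_pow_comb n; have [c [d [ric ncd]]] := cd_pow_comb i.
by rewrite /w ran ric cd_conj_comb cd_mul_comb cd_dot_comb comb_normM comb_normJ nab ncd exprD.
Qed.

End RealSpan.

(** * Root bounds *)

Lemma cd_abs_sqr m (x : cd R m) : cd_abs x ^+ 2 = cd_dot x x.
Proof. by rewrite /cd_abs cd_nE sqr_sqrtr ?cd_dotxx_ge0. Qed.

Lemma cd_abs_dot_le m (x y : cd R m) : `|cd_dot x y| <= cd_abs x * cd_abs y.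
Proof.
rewrite /cd_abs !cd_nE -sqrtrM ?cd_dotxx_ge0 // -sqrtr_sqr ler_sqrt.
  exact: cd_dot_cauchy_schwarz.
by rewrite mulr_ge0 ?cd_dotxx_ge0.
Qed.

Lemma cd_abs_realM m c (x : cd R m) : cd_abs (cd_mul (cd_real m c) x) = `|c| * cd_abs x.
Proof.
rewrite /cd_abs !cd_nE cd_mul_reall cd_dotZl cd_dotZr mulrA -expr2.
by rewrite sqrtrM ?sqr_ge0 // sqrtr_sqr.
Qed.

Lemma cd_dot_mul_pow_ge m (c r : cd R m) i n :
  - (cd_abs c * cd_abs r ^+ (n + i)) <= cd_dot (cd_mul c (cd_pow r i)) (cd_pow r n).
Proof.
set w := cd_mul (cd_pow r n) (cd_conj (cd_pow r i)).
have abs_w : cd_abs w = cd_abs r ^+ (n + i).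
  by rewrite {1}/cd_abs cd_nE cd_dot_pow_mul_conj sqrtrX ?cd_dotxx_ge0 // -cd_nE.
by have := cd_abs_dot_le c w; rewrite cd_dot_mulr_adj -/w abs_w ler_norml => /andP[].
Qed.

Lemma cd_root_bound m (s : seq (cd R m)) (r : cd R m) (d : nat) (L : R) :
  size s = d.+1 -> nth (cd_zero R m) s d = cd_real m L -> cd_peval s r = cd_zero R m ->
  L * cd_abs r ^+ d <= \sum_(i < d) cd_abs (nth (cd_zero R m) s i) * cd_abs r ^+ i.
Proof.
move=> size_s lead_s root_r; set x := cd_abs r; set S := \sum_(i < d) _.
have S_ge0 : 0 <= S by apply: sumr_ge0 => i _; rewrite mulr_ge0 ?exprn_ge0 ?sqrtr_ge0.
have scaled : x ^+ d * (L * x ^+ d) <= x ^+ d * S.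
  pose dot_rd z := cd_dot z (cd_pow r d).
  have := congr1 dot_rd root_r.
  rewrite /cd_peval {}/dot_rd cd_dot0l (big_morph _ (fun u v => cd_dotDl u v _) (cd_dot0l _)).
  rewrite size_s big_ord_recr /= lead_s cd_mul_reall cd_dotZl cd_dot_pow -cd_abs_sqr -/x.
  move=> sum0.
  have lower : \sum_(i < d) - (cd_abs (nth (cd_zero R m) s i) * x ^+ (d + i)) <=
      \sum_(i < d) cd_dot (cd_mul (nth (cd_zero R m) s i) (cd_pow r i)) (cd_pow r d).
    by apply: ler_sum => i _; exact: cd_dot_mul_pow_ge.
  rewrite sumrN in lower.
  have -> : x ^+ d * (L * x ^+ d) = L * (x ^+ 2) ^+ d.
    by rewrite -exprM mulnC exprM; ring.
  rewrite mulr_sumr; under eq_bigr => i _ do rewrite mulrCA -exprD.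
  lra.
have [xd_gt0 | xd_le0] := ltrP 0 (x ^+ d); first by rewrite -(ler_pM2l xd_gt0).
have xd0 : x ^+ d = 0 by apply/le_anti; rewrite xd_le0 exprn_ge0 ?sqrtr_ge0.
by rewrite xd0 mulr0.
Qed.

Lemma monic_root_bound m (a : seq (cd R m)) (r : cd R m) :
  cd_peval (rcons a (cd_one R m)) r = cd_zero R m ->
  cd_abs r ^+ size a <= \sum_(i < size a) cd_abs (nth (cd_zero R m) a i) * cd_abs r ^+ i.
Proof.
move=> root_r.
have lead : nth (cd_zero R m) (rcons a (cd_one R m)) (size a) = cd_real m 1.
  by rewrite nth_rcons ltnn eqxx.
have := cd_root_bound (size_rcons a _) lead root_r; rewrite mul1r.
by under eq_bigr => i _ do rewrite nth_rcons ltn_ord.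
Qed.

Lemma monic_deriv_root_bound m (a : seq (cd R m)) (r : cd R m) : (0 < size a)%N ->
  cd_peval (cd_deriv (rcons a (cd_one R m))) r = cd_zero R m ->
  cd_abs r ^+ (size a - 1) <=
  \sum_(i < size a - 1) cd_abs (nth (cd_zero R m) a (1 + i)) * cd_abs r ^+ i.
Proof.
move=> a_gt0; set f := rcons a _; set n := size a; set d := (n - 1)%N => root_r.
have n_eq : n = d.+1 by rewrite /d subn1 prednK.
have nth_df j : (j < n)%N -> nth (cd_zero R m) (cd_deriv f) j =
    cd_mul (cd_real m j.+1%:R) (nth (cd_zero R m) f j.+1).
  move=> j_lt; rewrite /cd_deriv size_rcons (nth_map 0%N) ?size_iota //.
  by rewrite nth_iota ?add1n.
have lead : nth (cd_zero R m) (cd_deriv f) d = cd_real m n%:R.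
  by rewrite nth_df -n_eq ?ltnSn // nth_rcons ltnn eqxx cd_mul_reall cd_scale_real mulr1.
have size_df : size (cd_deriv f) = d.+1 by rewrite size_map size_iota size_rcons -n_eq.
have := cd_root_bound size_df lead root_r; set x := cd_abs r => df_bound.
have n_gt0 : 0 < n%:R :> R by rewrite ltr0n.
rewrite -(ler_pM2l n_gt0); apply: le_trans df_bound _; rewrite mulr_sumr.
apply: ler_sum => i _; rewrite nth_df ?n_eq ?ltnS 1?ltnW // cd_abs_realM.
rewrite /f nth_rcons -/n n_eq ltnS ltn_ord ger0_norm // mulrA.
by rewrite !ler_wpM2r ?exprn_ge0 ?sqrtr_ge0 // ler_nat ltnS ltnW.
Qed.

Lemma cauchy_bounds_shift m (a : seq (cd R m)) (r : cd R m) k :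
  cd_abs r ^+ (size a - k) <=
    \sum_(i < size a - k) cd_abs (nth (cd_zero R m) a (k + i)) * cd_abs r ^+ i ->
  cd_abs r < R1 a /\ cd_abs r < R2 a /\ cd_abs r <= R3 a.
Proof.
pose A j := cd_abs (nth (cd_zero R m) a j); pose b i := A (k + i)%N.
have A_ge0 j : 0 <= A j := sqrtr_ge0 _.
have x_ge0 : 0 <= cd_abs r := sqrtr_ge0 _.
move=> x_root; split; [|split].
- rewrite /R1 -(ger0_norm x_ge0) -sqrtr_sqr ltr_sqrt; last first.
    by rewrite ltr_pwDl // sumr_ge0 // => j _; rewrite sqr_ge0.
  apply: lt_le_trans (cauchy_bound_sqr (b := b) x_ge0 x_root) _; rewrite lerD2l.
  exact: (sum_shift_le (size a) k (fun j => sqr_ge0 (A j))).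
- apply: (cauchy_bound_max (b := b) x_ge0 x_root) => i i_lt.
  have ki : (k + i < size a)%N by rewrite -ltn_subRL.
  exact: (le_bigmax _ (fun j : 'I_(size a) => A j) (Ordinal ki)).
- apply: le_trans (cauchy_bound_sum (b := b) x_root (fun i => A_ge0 _)) _.
  rewrite /R3 ge_max !le_max lexx /=; apply/orP; right.
  exact: (sum_shift_le (size a) k A_ge0).
Qed.

End CayleyDickson.

Theorem corollary4p12 (R : realType) (m : nat) (a : seq (cd R m)) :
  (0 < size a)%N ->
  let f := rcons a (cd_one R m) in
  forall r : cd R m,
    (cd_peval f r = cd_zero R m \/ cd_peval (cd_deriv f) r = cd_zero R m) ->
    cd_abs r < R1 a /\ cd_abs r < R2 a /\ cd_abs r <= R3 a.
Proof.
move=> a_gt0 f r [f_root | df_root].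
  by apply: (cauchy_bounds_shift (k := 0)); rewrite subn0; exact: monic_root_bound.
exact/(cauchy_bounds_shift (k := 1))/monic_deriv_root_bound.
Qed.
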